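(* There is $C_0=C_0(N)>0$ such that for every $T>0$, every $f\in\mathcal{VT}_1^+(T)$ and every $\mathbf{x}_0\in\mathbb{R}^N$, $$f(\mathbf{x}_0)\le C_0T^{-\frac N2}\int_{B_{\sqrt T}(\mathbf{x}_0)}f\,d\mathcal{L}^N\le C_0T^{-\frac N2}.$$
   Context: For positive $U\in C^2(\mathbb{R}^N)$, $\tau(U)=\sup\{\tau\ge0:2\tau\nabla^2\log U+g_{\mathbb{R}}\ge0\}$ (inequality of symmetric matrices); $\mathcal{VT}_1^+(T)=\{u\in C^2\cap L^1(\mathbb{R}^N):u>0,\tau(u)\ge T,\int_{\mathbb{R}^N}u\,d\mathcal{L}^N=1\}$. *)

From HB Require Import structures.
From mathcomp Require Import all_boot all_order all_algebra.
From mathcomp Require Import all_classical all_reals all_analysis.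
Set Implicit Arguments. Unset Strict Implicit. Unset Printing Implicit Defensive.
Import Order.TTheory GRing.Theory Num.Theory.
Import numFieldNormedType.Exports.
Local Open Scope classical_set_scope.
Local Open Scope ring_scope.

Section VT.
Variable R : realType.

Definition ebasis (N : nat) (i : 'I_N) : 'rV[R]_N := delta_mx 0 i.

Definition partial (N : nat) (i : 'I_N) (h : 'rV[R]_N -> R) : 'rV[R]_N -> R :=
  fun x => derive h x (ebasis i).

Definition C2 (N : nat) (U : 'rV[R]_N -> R) : Prop :=
  [/\ continuous U,
      (forall i x, derivable U x (ebasis i)),
      (forall i, continuous (partial i U)),
      (forall i j x, derivable (partial i U) x (ebasis j)) &
      (forall i j, continuous (partial j (partial i U)))].

Definition enorm (N : nat) (x : 'rV[R]_N) : R := Num.sqrt (\sum_i x 0 i ^+ 2).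
Definition eball (N : nat) (x0 : 'rV[R]_N) (r : R) : set 'rV[R]_N :=
  [set x | enorm (x - x0) < r].

(* Lebesgue integral on R^N of a nonnegative (extended-real) function,
   as the iterated integral w.r.t. the 1-dimensional Lebesgue measure
   (equal to the N-dimensional Lebesgue integral by Tonelli). *)
Fixpoint iint (n : nat) : ('rV[R]_n -> \bar R) -> \bar R :=
  match n with
  | 0 => fun F => F 0
  | n'.+1 => fun F =>
      (\int[@lebesgue_measure R]_t iint (fun y : 'rV[R]_n' => F (row_mx (\row_(k < 1) t) y)))%E
  end.

(* 2 tau Hess(log U) + g >= 0 as symmetric matrices, g = Euclidean metric *)
Definition hess_cond (N : nat) (U : 'rV[R]_N -> R) (tau : R) : Prop :=
  forall (x v : 'rV[R]_N),
    0 <= \sum_i \sum_j v 0 i * v 0 j *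
            (2 * tau * partial j (partial i (fun y => ln (U y))) x
             + (i == j)%:R).

Definition tauU (N : nat) (U : 'rV[R]_N -> R) : \bar R :=
  ereal_sup [set t%:E | t in [set t : R | 0 <= t /\ hess_cond U t]].

Definition VT1plus (N : nat) (T : R) : set ('rV[R]_N -> R) :=
  [set u | [/\ C2 u,
              (iint (fun x => (`|u x|)%:E) < +oo)%E,
              (forall x, 0 < u x),
              (T%:E <= tauU u)%E &
              iint (fun x => (u x)%:E) = 1%E]].

End VT.

From HB Require Import structures.
From mathcomp Require Import all_boot all_order all_algebra.
From mathcomp Require Import all_classical all_reals all_analysis.
From mathcomp Require Import ring lra.
Set Implicit Arguments. Unset Strict Implicit. Unset Printing Implicit Defensive.
Import Order.TTheory GRing.Theory Num.Theory.
Import numFieldNormedType.Exports.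
Local Open Scope classical_set_scope.
Local Open Scope ring_scope.

(* Along a coordinate line, the condition 2 t Hess(log f) + g >= 0 says that
   (log f)'' >= -1/(2t).  By the mean value theorem applied twice, on the side
   where (log f)' >= 0 the function log f loses at most s^2/(2t) <= 1/2 over a
   segment of length s <= a <= sqrt t, so f stays above half its value there.
   Choosing such a half segment coordinate by coordinate in the iterated
   integral gives f(x0) (a/2)^N <= the integral of f over the cube of half
   side a around x0; for a^2 = T/(2(N+1)) this cube lies in the ball of radius
   sqrt T, while any tau > T/2 admissible for f satisfies a^2 <= tau.  The
   second inequality is just the normalisation of f. *)

(* Unlike [ge0_le_integral], no measurability is assumed (none is known for
   the integrands of [iint]): the integral of a nonnegative function is a
   supremum over the simple functions below it. *)
Lemma ge0_le_integralT d (T : measurableType d) (R : realType)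
    (mu : {measure set T -> \bar R}) (f g : T -> \bar R) :
  (forall x, 0 <= f x)%E -> (forall x, f x <= g x)%E ->
  (\int[mu]_x f x <= \int[mu]_x g x)%E.
Proof.
move=> f0 fg; have g0 x : (0 <= g x)%E by exact: le_trans (f0 x) (fg x).
rewrite !ge0_integralTE //; apply: ereal_sup_le => _ [h /= hf <-].
by exists h => //= x; exact: le_trans (hf x) (fg x).
Qed.

Section iterated_integral.
Variable R : realType.

Lemma iint_ge0 n (F : 'rV[R]_n -> \bar R) :
  (forall x, 0 <= F x)%E -> (0 <= iint F)%E.
Proof.
elim: n F => [|n IH] F F0 /=; first exact: F0.
by apply: integral_ge0 => t _; exact: IH.
Qed.

Lemma le_iint n (F G : 'rV[R]_n -> \bar R) :
  (forall x, 0 <= F x)%E -> (forall x, F x <= G x)%E -> (iint F <= iint G)%E.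
Proof.
elim: n F G => [|n IH] F G F0 FG /=; first exact: FG.
apply: ge0_le_integralT => t; first exact: iint_ge0.
exact: IH.
Qed.

Lemma le_iint_indic n (A B : set 'rV[R]_n) (f : 'rV[R]_n -> R) :
  A `<=` B -> (forall x, 0 <= f x) ->
  (iint (fun x => (\1_A x * f x)%:E) <= iint (fun x => (\1_B x * f x)%:E))%E.
Proof.
move=> AB f0; apply: le_iint => x; first by rewrite lee_fin mulr_ge0.
rewrite lee_fin ler_wpM2r // !indicE.
by case: (boolP (x \in A)) => [/set_mem/AB/mem_set -> | _] //=; rewrite lexx.
Qed.

Lemma iint_indic_le n (A : set 'rV[R]_n) (f : 'rV[R]_n -> R) :
  (forall x, 0 <= f x) ->
  (iint (fun x => (\1_A x * f x)%:E) <= iint (fun x => (f x)%:E))%E.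
Proof.
move=> f0; apply: le_iint => x; first by rewrite lee_fin mulr_ge0.
by rewrite lee_fin indicE; case: (_ \in _); rewrite ?mul1r ?mul0r.
Qed.

Lemma integral_cst_indic_itvcc (k lo hi : R) : 0 <= k -> lo <= hi ->
  (\int[@lebesgue_measure R]_t (k * \1_(`[lo, hi]%classic) t)%:E
   = (k * (hi - lo))%:E)%E.
Proof.
move=> k0 lohi; rewrite integralZl_indic //; last by rewrite ltNge k0.
rewrite integral_indic // setIT.
have := lebesgue_measure_itv `[lo, hi]; rewrite /= => ->; rewrite lte_fin.
case: ltgtP lohi => // -> _.
by rewrite subrr mulr0 mule0.
Qed.

End iterated_integral.

Section cube_integral.
Variable R : realType.

Definition cube n (c : 'rV[R]_n) (a : R) : set 'rV[R]_n :=
  [set x | forall i, `|x 0 i - c 0 i| <= a].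

Definition half_on_segments n (G : 'rV[R]_n -> R) (a : R) : Prop :=
  forall x i,
    (forall s, 0 <= s <= a -> G x / 2 <= G (x + s *: ebasis R i)) \/
    (forall s, 0 <= s <= a -> G x / 2 <= G (x - s *: ebasis R i)).

Lemma row_mx_addZ_ebasis_rshift n (t s : R) (y : 'rV[R]_n) i :
  row_mx (\row_(k < 1) t) y + s *: ebasis R (rshift 1 i) =
  row_mx (\row_(k < 1) t) (y + s *: ebasis R i).
Proof. by rewrite /ebasis delta_mx_rshift scale_row_mx add_row_mx scaler0 addr0. Qed.

Lemma row_mx_addZ_ebasis_lshift n (t s : R) (y : 'rV[R]_n) :
  row_mx (\row_(k < 1) t) y + s *: ebasis R (lshift n (0 : 'I_1)) =
  row_mx (\row_(k < 1) (t + s)) y.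
Proof.
rewrite /ebasis delta_mx_lshift scale_row_mx add_row_mx scaler0 addr0.
by congr row_mx; apply/rowP => k; rewrite !mxE (ord1 k) /= mulr1.
Qed.

Lemma rV_row_mx n (c : 'rV[R]_n.+1) :
  exists c0 cr, c = row_mx (\row_(k < 1) c0) cr.
Proof.
exists (c 0 (lshift n (0 : 'I_1))), (rsubmx (c : 'rV_(1 + n))).
rewrite -[LHS](@hsubmxK _ _ 1 n); f_equal.
by apply/rowP => k; rewrite (ord1 k) !mxE.
Qed.

Lemma cube_row_mx n (t c0 : R) (y cr : 'rV[R]_n) a :
  (row_mx (\row_(k < 1) t) y \in cube (row_mx (\row_(k < 1) c0) cr) a) =
  (`|t - c0| <= a) && (y \in cube cr a).
Proof.
apply/idP/andP => [/set_mem cube_ty | [t_c0 /set_mem cube_y]].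
  split; first by have := cube_ty (lshift n (0 : 'I_1)); rewrite !row_mxEl !mxE.
  by apply/mem_set => j; have := cube_ty (rshift 1 j); rewrite !row_mxEr.
apply/mem_set => i; rewrite -(splitK i); case: (fintype.split i) => j /=.
  by rewrite !row_mxEl !mxE.
by rewrite !row_mxEr.
Qed.

Lemma half_on_segments_slice n (G : 'rV[R]_n.+1 -> R) a t :
  half_on_segments G a -> half_on_segments (fun y => G (row_mx (\row_(k < 1) t) y)) a.
Proof.
move=> hG y i; case: (hG (row_mx (\row_(k < 1) t) y) (rshift 1 i)) => H;
  [left|right] => s hs.
  by rewrite -row_mx_addZ_ebasis_rshift; exact: H.
by rewrite -scaleNr -row_mx_addZ_ebasis_rshift scaleNr; exact: H.
Qed.

Lemma half_on_first_segment n (G : 'rV[R]_n.+1 -> R) a c0 cr :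
  0 <= a -> half_on_segments G a ->
  exists lo hi, [/\ lo <= hi, hi - lo = a &
    forall t, lo <= t <= hi -> `|t - c0| <= a /\
      G (row_mx (\row_(k < 1) c0) cr) / 2 <= G (row_mx (\row_(k < 1) t) cr)].
Proof.
move=> a0 hG; have [H|H] := hG (row_mx (\row_(k < 1) c0) cr) (lshift n (0 : 'I_1)).
  exists c0, (c0 + a); split; [by rewrite lerDl | by rewrite addrC addKr |].
  move=> t /andP[c0t tca]; split; first by rewrite ger0_norm ?subr_ge0 // lerBlDl.
  have := H (t - c0); rewrite row_mx_addZ_ebasis_lshift subrKC; apply.
  by rewrite subr_ge0 c0t /= lerBlDl.
exists (c0 - a), c0; split; [by rewrite gerBl | by rewrite opprB addrC subrK |].
move=> t /andP[tca tc0]; split.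
  by rewrite ler0_norm ?subr_le0 // opprB lerBlDl addrC -lerBlDl.
have := H (c0 - t).
rewrite -scaleNr row_mx_addZ_ebasis_lshift opprB addrCA subrr addr0; apply.
by rewrite subr_ge0 tc0 /= lerBlDl addrC -lerBlDl.
Qed.

Lemma iint_cube_ge n (G : 'rV[R]_n -> R) (a : R) (c : 'rV[R]_n) :
  0 <= a -> (forall x, 0 <= G x) -> half_on_segments G a ->
  (((a / 2) ^+ n * G c)%:E <= iint (fun x => (\1_(cube c a) x * G x)%:E))%E.
Proof.
elim: n G c => [|n IH] G c a0 G0 hG.
  rewrite /= expr0 mul1r indicE.
  have -> : (0 : 'rV[R]_0) \in cube c a by apply/mem_set => -[].
  by rewrite mul1r [c]thinmx0.
have [c0 [cr ->]] := rV_row_mx c.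
have [lo [hi [lohi hilo half_t]]] := half_on_first_segment c0 cr a0 hG.
set Gc := G (row_mx (\row_(k < 1) c0) cr).
have Gc0 : 0 <= Gc by exact: G0.
have Ga0 : 0 <= (a / 2) ^+ n * (Gc / 2) by rewrite mulr_ge0 ?exprn_ge0 ?divr_ge0.
apply: (@le_trans _ _ (\int[@lebesgue_measure R]_t
    ((a / 2) ^+ n * (Gc / 2) * \1_(`[lo, hi]%classic) t)%:E)%E).
  by rewrite integral_cst_indic_itvcc // hilo lee_fin exprSr; lra.
apply: ge0_le_integralT => t; first by rewrite lee_fin mulr_ge0.
rewrite indicE; have [/set_mem/half_t [t_c0 Gt]|_] := boolP (t \in _); last first.
  by rewrite mulr0; apply: iint_ge0 => y; rewrite lee_fin mulr_ge0.
rewrite mulr1; apply: (@le_trans _ _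
    (iint (fun y => (\1_(cube cr a) y * G (row_mx (\row_(k < 1) t) y))%:E))).
  apply: le_trans (IH _ _ a0 (fun y => G0 _) (half_on_segments_slice t hG)).
  by rewrite lee_fin ler_wpM2l ?exprn_ge0 ?divr_ge0.
apply: le_iint => y; first by rewrite lee_fin mulr_ge0.
by rewrite !indicE cube_row_mx t_c0.
Qed.

End cube_integral.

Section coordinate_lines.
Variables (R : realType) (n : nat).
Implicit Types (H : 'rV[R]_n -> R) (x v : 'rV[R]_n).

Let line_quotient H x v s :
  (fun h : R => h^-1 *: (((fun r : R => H (r *: v + x)) \o shift s) (h *: 1)
                          - H (s *: v + x))) =
  (fun h : R => h^-1 *: ((H \o shift (s *: v + x)) (h *: v) - H (s *: v + x))).
Proof.
apply/funext => h /=; congr (_ *: (H _ - _)).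
by rewrite [h *: 1]mulr1 scalerDl addrA.
Qed.

Lemma derive_line H x v s :
  derive (fun r : R => H (r *: v + x)) s 1 = derive H (s *: v + x) v.
Proof. by rewrite /derive line_quotient. Qed.

Lemma derivable_line H x v s :
  derivable (fun r : R => H (r *: v + x)) s 1 <-> derivable H (s *: v + x) v.
Proof. by rewrite /derivable line_quotient. Qed.

Lemma derive1_ln_comp (g : R -> R) s : 0 < g s -> derivable g s 1 ->
  derivable (fun r => ln (g r)) s 1 /\
  derive (fun r => ln (g r)) s 1 = derive g s 1 / g s.
Proof.
move=> gs dg.
have dln : derivable (@ln R) (g s) 1 by apply: ex_derive; exact: is_derive1_ln.
have dcomp : derivable ((@ln R) \o g) s 1.
  by apply/derivable1_diffP; apply: differentiable_comp; exact/derivable1_diffP.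
split; first exact: dcomp.
have := derive1_comp dg dln; rewrite !derive1E => /= ->.
by have [_ ->] := is_derive1_ln gs; rewrite mulrC.
Qed.

Lemma derive_ln_comp H x v : (forall z, 0 < H z) -> derivable H x v ->
  derivable (fun z => ln (H z)) x v /\
  derive (fun z => ln (H z)) x v = derive H x v / H x.
Proof.
move=> Hpos dH.
have := (derivable_line H x v 0).2; rewrite scale0r add0r => /(_ dH) dline.
have := derive1_ln_comp (Hpos _) dline; rewrite /= scale0r add0r => -[dln dlnE].
split.
  by have := (derivable_line (fun z => ln (H z)) x v 0).1; rewrite scale0r add0r; apply.
have := derive_line (fun z => ln (H z)) x v 0; rewrite scale0r add0r => <-.
rewrite dlnE; congr (_ / _).
by have := derive_line H x v 0; rewrite scale0r add0r.
Qed.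

End coordinate_lines.

Lemma le_quadratic_one_side (R : realType) (g : R -> R) (m : R) : 0 <= m ->
  (forall s, derivable g s 1) ->
  (forall s, derivable (fun r => derive g r 1) s 1) ->
  (forall s, - m <= derive (fun r => derive g r 1) s 1) ->
  forall s, 0 <= s ->
    (0 <= derive g 0 1 -> g 0 - m * s ^+ 2 <= g s) /\
    (derive g 0 1 <= 0 -> g 0 - m * s ^+ 2 <= g (- s)).
Proof.
move=> m0 dg dg' g''_ge s s0; set g' := fun r => derive g r 1.
have cont (h : R -> R) : (forall s, derivable h s 1) -> forall A, {within A, continuous h}.
  move=> dh A; apply: continuous_subspaceT => x.
  exact/differentiable_continuous/derivable1_diffP.
have g'_incr u w : u <= w -> - m * (w - u) <= g' w - g' u.
  move=> uw; have [c _ ->] := @MVT_segment R g' (fun r => derive g' r 1) u w uw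
    (fun r _ => derivableP (dg' r)) (cont _ dg' _).
  by rewrite ler_wpM2r ?subr_ge0.
have mvt u w : u <= w -> exists2 c, u <= c <= w & g w - g u = g' c * (w - u).
  move=> uw; have [c /[!in_itv] /= cuw ->] := @MVT_segment R g g' u w uw
    (fun r _ => derivableP (dg r)) (cont _ dg _).
  by exists c.
split => g'0.
  have [c /andP[c0 cs] E] := mvt 0 s s0; have := g'_incr 0 c c0.
  rewrite subr0 in E *; rewrite /g' => g'c.
  have : - m * s <= g' c by rewrite /g'; nra.
  nra.
have sn0 : - s <= 0 by rewrite oppr_le0.
have [c /andP[sc c0] E] := mvt (- s) 0 sn0.
have := g'_incr c 0 c0; rewrite sub0r opprK in E; rewrite sub0r /g' => g'c.
have : g' c <= m * s by rewrite /g'; nra.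
nra.
Qed.

Lemma le_half_of_ln (R : realType) (p q : R) : 0 < p -> 0 < q ->
  ln p - 2^-1 <= ln q -> p / 2 <= q.
Proof.
move=> p0 q0; rewrite -[_ <= ln q]ler_expR expRD !lnK ?posrE // => /(le_trans _); apply.
by rewrite ler_pM2l //; apply: le_trans (expR_ge1Dx _); lra.
Qed.

Section semiconcave_log.
Variables (R : realType) (n : nat) (f : 'rV[R]_n -> R) (t : R).
Hypotheses (f_C2 : C2 f) (f_gt0 : forall x, 0 < f x) (t_gt0 : 0 < t).
Hypothesis f_hess : hess_cond f t.

Lemma hess_cond_diag i x :
  - (2 * t)^-1 <= partial i (partial i (fun y => ln (f y))) x.
Proof.
have := f_hess x (ebasis R i).
rewrite (bigD1 i) //= [X in _ + X]big1 ?addr0; last first.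
  by move=> k ki; apply: big1 => l _; rewrite /ebasis mxE (negbTE ki) andbF !mul0r.
rewrite (bigD1 i) //= [X in _ + X]big1 ?addr0; last first.
  by move=> l li; rewrite /ebasis !mxE (negbTE li) andbF mulr0 mul0r.
rewrite /ebasis mxE !eqxx /= !mul1r => diag_ge0.
have t2 : 0 < 2 * t by rewrite mulr_gt0.
have ti : 0 <= (2 * t)^-1 by rewrite invr_ge0 ltW.
have := mulr_ge0 ti diag_ge0.
by rewrite mulrDr mulrA mulVf ?gt_eqF // mul1r mulr1; lra.
Qed.

Lemma ln_coord_line_semiconcave i x (g := fun r : R => ln (f (r *: ebasis R i + x))) :
  [/\ forall s, derivable g s 1,
      forall s, derivable (fun r => derive g r 1) s 1 &
      forall s, - (2 * t)^-1 <= derive (fun r => derive g r 1) s 1].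
Proof.
have [_ df _ ddf _] := f_C2; set v := ebasis R i; set L := fun z => ln (f z).
have dL y : derivable L y v /\ derive L y v = partial i f y / f y.
  exact: derive_ln_comp f_gt0 (df i y).
have partial_L : partial i L = fun y => partial i f y / f y.
  by apply/funext => y; rewrite /partial -(dL y).2.
have ddL y : derivable (partial i L) y v.
  rewrite partial_L; apply: derivableM; first exact: ddf.
  by apply: derivableV; [exact: lt0r_neq0 | exact: df].
have g'E : (fun r => derive g r 1) = fun r => partial i L (r *: v + x).
  by apply/funext => r; exact: derive_line L x v r.
split => s; first by apply/(derivable_line L); exact: (dL _).1.
  by rewrite g'E; apply/(derivable_line (partial i L)); exact: ddL.
by rewrite g'E derive_line; exact: hess_cond_diag.
Qed.

Lemma half_on_segments_of_hess a : a ^+ 2 <= t -> half_on_segments f a.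
Proof.
move=> a2t x i; have [dg dg' g''_ge] := ln_coord_line_semiconcave i x.
have m0 : 0 <= (2 * t)^-1 by rewrite invr_ge0 mulr_ge0 // ltW.
have side := le_quadratic_one_side m0 dg dg' g''_ge.
set g := fun r : R => ln (f (r *: ebasis R i + x)) in side.
(* [ln f] drops by at most [s^2 / (2 t) <= 1/2] over a segment of length [s <= a] *)
have drop_le s : 0 <= s <= a -> (2 * t)^-1 * s ^+ 2 <= 2^-1.
  move=> /andP[s0 sa]; have s2t : s ^+ 2 <= t.
    by apply: le_trans a2t; rewrite ler_pXn2r // ?nnegrE // (le_trans s0).
  by rewrite invfM mulrAC ler_pdivrMr // ler_pM2l // invr_gt0.
have [g'0|g'0] := leP 0 (derive g 0 1); [left|right] => s hs;
  have /andP[s0 _] := hs; apply: le_half_of_ln => //; have := drop_le s hs.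
  by have := (side s s0).1 g'0; rewrite /g /= scale0r add0r [x + _]addrC; lra.
by have := (side s s0).2 (ltW g'0); rewrite /g /= scale0r add0r scaleNr [x - _]addrC; lra.
Qed.

End semiconcave_log.

Lemma powR_Nhalf (R : realType) (T : R) (N : nat) : 0 < T ->
  T `^ (- (N%:R / 2)) = (Num.sqrt T ^+ N)^-1.
Proof.
move=> T0.
by rewrite powRN mulrC powRrM powR12_sqrt ?ltW // powR_mulrn // sqrtr_ge0.
Qed.

Lemma cube_sub_eball (R : realType) n (c : 'rV[R]_n) (a r : R) :
  0 < r -> n%:R * a ^+ 2 < r ^+ 2 -> cube c a `<=` eball c r.
Proof.
move=> r0 nar x cube_x; rewrite /eball /enorm /= -(ger0_norm (ltW r0)) -sqrtr_sqr.
rewrite ltr_sqrt ?exprn_gt0 //; apply: le_lt_trans nar.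
rewrite mulr_natl -[n in _ *+ n]card_ord -sumr_const.
apply: ler_sum => i _; rewrite !mxE -real_normK ?num_real //.
by rewrite ler_pXn2r ?nnegrE ?(le_trans _ (cube_x i)) ?normr_ge0.
Qed.

Lemma iint_eball_ge (R : realType) n (f : 'rV[R]_n -> R) (t a r : R) c :
  C2 f -> (forall x, 0 < f x) -> 0 < t -> hess_cond f t ->
  0 <= a -> a ^+ 2 <= t -> 0 < r -> n%:R * a ^+ 2 < r ^+ 2 ->
  (((a / 2) ^+ n * f c)%:E <= iint (fun x => (\1_(eball c r) x * f x)%:E))%E.
Proof.
move=> f_C2 f_gt0 t0 hf a0 a2t r0 nar; have f_ge0 x : 0 <= f x by exact: ltW.
have half_f := half_on_segments_of_hess f_C2 f_gt0 t0 hf a2t.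
apply: le_trans (iint_cube_ge c a0 f_ge0 half_f) _.
exact/le_iint_indic/f_ge0/cube_sub_eball.
Qed.

Lemma lt_tauU (R : realType) n (U : 'rV[R]_n -> R) (s : R) :
  (s%:E < tauU U)%E -> exists2 t, hess_cond U t & s < t.
Proof.
by move=> /ereal_sup_gt [_ [t [_ ht] <-]]; rewrite lte_fin => st; exists t.
Qed.

Theorem mainTheorem14 (R : realType) (N : nat) :
  exists C0 : R, 0 < C0 /\
    forall (T : R), 0 < T ->
    forall f : 'rV[R]_N -> R, VT1plus T f ->
    forall x0 : 'rV[R]_N,
      ((f x0)%:E <= (C0 * T `^ (- (N%:R / 2)))%:E *
                     iint (fun x => (\1_(eball x0 (Num.sqrt T)) x * f x)%:E))%E /\
      ((C0 * T `^ (- (N%:R / 2)))%:E *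
         iint (fun x => (\1_(eball x0 (Num.sqrt T)) x * f x)%:E)
       <= (C0 * T `^ (- (N%:R / 2)))%:E)%E.
Proof.
(* with [k = 2 (N + 1)], the half side [a = sqrt (T / k)] gives [N a^2 < T] and [a^2 <= T / 2] *)
have N0 : 0 <= N%:R :> R by [].
set k : R := 2 * (N%:R + 1); have k0 : 0 < k by rewrite /k; lra.
exists ((2 * Num.sqrt k) ^+ N); split; first by rewrite exprn_gt0 ?mulr_gt0 ?sqrtr_gt0.
move=> T T0 f [f_C2 _ f_gt0 f_tau f_int1] x0.
have [t hf tT] : exists2 t, hess_cond f t & T / 2 < t.
  by apply: lt_tauU; apply: lt_le_trans f_tau; rewrite lte_fin; lra.
set a := Num.sqrt T / Num.sqrt k.
have a0 : 0 <= a by rewrite divr_ge0 ?sqrtr_ge0.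
have a2 : a ^+ 2 = T / k by rewrite expr_div_n !sqr_sqrtr // ltW.
have t0 : 0 < t by lra.
have lower := iint_eball_ge x0 f_C2 f_gt0 t0 hf a0.
set C := (2 * Num.sqrt k) ^+ N * T `^ (- (N%:R / 2)).
have C0 : 0 <= C by rewrite mulr_ge0 ?powR_ge0 // exprn_ge0 // mulr_ge0 // sqrtr_ge0.
have C_cube : C * (a / 2) ^+ N = 1.
  rewrite /C powR_Nhalf // /a -!exprVn -!exprMn -(expr1n _ N); congr (_ ^+ _).
  by field; rewrite !gt_eqF ?sqrtr_gt0.
split; last first.
  by rewrite -[leRHS]mule1 lee_wpmul2l // -f_int1 iint_indic_le // => x; exact: ltW.
rewrite -[f x0]mul1r -C_cube -mulrA EFinM lee_wpmul2l //.
apply: lower; [|by rewrite sqrtr_gt0|].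
  by rewrite a2 (le_trans _ (ltW tT)) // ler_pdivrMr // /k; nra.
by rewrite sqr_sqrtr ?ltW // a2 mulrA ltr_pdivrMr // /k; nra.
Qed.
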